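(* Let $1 \leq k \leq n$ and $x \in [0,1]^n$. Then for every subset $W \subseteq \{1, \ldots, n\}$ with $|W| \geq k$, $$Q_k(x) \geq \frac{1}{|W| - k + 1}\left(\sum_{i \in W} x_i - k + 1\right).$$
   Context: For $x \in \mathbb{R}^n$ and an integer $1 \leq k \leq n$, $Q_k(x)$ denotes the $k$-th largest entry of $x$ (entries counted with multiplicity). *)

From mathcomp Require Import all_boot all_order all_algebra.
Set Implicit Arguments. Unset Strict Implicit. Unset Printing Implicit Defensive.
Import Order.TTheory GRing.Theory Num.Theory.
Local Open Scope ring_scope.

Definition Qk (R : realDomainType) (n : nat) (k : nat) (x : 'I_n -> R) : R :=
  nth 0 (sort (fun a b : R => b <= a) [seq x i | i <- enum 'I_n]) k.-1.

From mathcomp Require Import all_boot all_order all_algebra.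
From mathcomp Require Import lra.
Set Implicit Arguments. Unset Strict Implicit. Unset Printing Implicit Defensive.
Import Order.TTheory GRing.Theory Num.Theory.
Local Open Scope ring_scope.

(* Let q = Q_k(x). At most k - 1 entries of x exceed q, and every entry is at
   most q, or at most 1 = q + (1 - q) when it exceeds q.  Summing over W gives
   sum_W x <= |W| q + (k - 1)(1 - q) = (|W| - k + 1) q + k - 1. *)

Lemma count_gt_nth_sorted_ge {d : Order.disp_t} {T : porderType d}
    (x0 : T) {s : seq T} {m : nat} :
  sorted >=%O s -> (m < size s)%N ->
  (count (fun y => nth x0 s m < y)%O s <= m)%N.
Proof.
move=> s_sorted m_lt.
have none_gt_after : count (fun y => nth x0 s m < y)%O (drop m s) = 0%N.
  apply/eqP; rewrite -leqn0 leqNgt -has_count.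
  apply/hasPn => _ /(nthP x0) [j j_lt <-].
  rewrite size_drop ltn_subRL in j_lt.
  rewrite nth_drop le_gtF //.
  by apply: (sorted_leq_nth ge_trans (@lexx _ T) x0 s_sorted); rewrite ?inE ?leq_addr.
rewrite -[s in count _ s](cat_take_drop m) count_cat none_gt_after addn0.
by rewrite (leq_trans (count_size _ _)) // size_take m_lt.
Qed.

Lemma sum_le_card_gt (R : realDomainType) (I : finType) (W : {pred I})
    (x : I -> R) (q : R) :
  (forall i, x i <= 1) ->
  \sum_(i in W) x i <= #|W|%:R * q + #|[pred i in W | q < x i]|%:R * (1 - q).
Proof.
move=> x_le1.
have card_gt : #|[pred i in W | q < x i]|%:R = \sum_(i in W) (q < x i)%R%:R :> R.
  rewrite -sum1_card natr_sum [LHS]big_mkcond [RHS]big_mkcond /=.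
  by apply: eq_bigr => i _; rewrite inE; case: (i \in W); case: (q < x i).
rewrite card_gt mulr_natl -sumr_const mulr_suml -big_split /=.
apply: ler_sum => i _.
case: ltP => [_ | x_le_q]; first by rewrite mul1r addrC subrK x_le1.
by rewrite mul0r addr0.
Qed.

Section KthLargest.

Variables (R : realDomainType) (n k : nat) (x : 'I_n -> R).
Hypotheses (k_gt0 : (0 < k)%N) (k_le_n : (k <= n)%N).

Let s := sort >=%O (codom x).

Let size_s : (k.-1 < size s)%N.
Proof. by rewrite size_sort size_codom card_ord prednK. Qed.

Lemma Qk_codom : Qk k x \in codom x.
Proof. by rewrite -(mem_sort >=%O) (mem_nth 0 size_s). Qed.

Lemma card_gt_Qk : (#|[pred i | Qk k x < x i]%R| <= k.-1)%N.
Proof.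
have sorted_s : sorted >=%O s by apply: sort_sorted => a b; exact: le_total.
have := count_gt_nth_sorted_ge 0 sorted_s size_s.
by rewrite (permP (permEl (perm_sort _ _))) codomE count_map cardE size_filter enumT.
Qed.

End KthLargest.

Theorem theorem3 (R : realFieldType) (n k : nat) (x : 'I_n -> R)
  (hk1 : (1 <= k)%N) (hkn : (k <= n)%N)
  (hx : forall i, 0 <= x i <= 1)
  (W : {set 'I_n}) (hW : (k <= #|W|)%N) :
  Qk k x >= ((#|W| - k + 1)%:R)^-1 * (\sum_(i in W) x i - k%:R + 1).
Proof.
have x_le1 i : x i <= 1 by case/andP: (hx i).
have q_le1 : Qk k x <= 1 by have /codomP [i ->] := Qk_codom x hk1 hkn.
set q := Qk k x in q_le1 *.
have card_W : (#|[pred i in W | q < x i]%R| <= k.-1)%N.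
  apply: leq_trans (card_gt_Qk x hk1 hkn).
  by apply: subset_leq_card; apply/subsetP => i; rewrite !inE => /andP[].
have sum_le : \sum_(i in W) x i <= #|W|%:R * q + (k%:R - 1) * (1 - q).
  apply: le_trans (sum_le_card_gt W q x_le1) _.
  rewrite lerD2l ler_wpM2r ?subr_ge0 //.
  by rewrite -[in k%:R](prednK hk1) -natr1 addrK ler_nat.
rewrite ler_pdivrMl ?ltr0n ?addn1 // -natr1 natrB //.
lra.
Qed.
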